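(* Let $\mathbb{X}$ be a Cartesian left additive category and $f_\bullet:A\to B$ a pre-$\mathsf{D}$-sequence. The following are equivalent: (i) $f_\bullet$ is a $\mathsf{D}$-sequence; (ii) for each $n\in\mathbb{N}$ and $k\le n$: [DS.1$'$] $\mathsf{P}^k(\langle1,0\rangle)f_{n+1}=0$; [DS.2$'$] $\mathsf{P}^k(1\times(\pi_0+\pi_1))f_{n+1}=\mathsf{P}^k(1\times\pi_0)f_{n+1}+\mathsf{P}^k(1\times\pi_1)f_{n+1}$; [DS.3$'$] $\mathsf{P}^k(\ell)f_{n+2}=f_{n+1}$ with $\ell:\mathsf{P}^{n-k+1}(A)\to\mathsf{P}^{n-k+2}(A)$; [DS.4$'$] $\mathsf{P}^k(c)f_{n+2}=f_{n+2}$ with $c:\mathsf{P}^{n-k+2}(A)\to\mathsf{P}^{n-k+2}(A)$. Here, with $E=\mathsf{P}^{n-k}(A)$, $\langle1,0\rangle:E\to E\times E$, $1\times(\pi_0+\pi_1),1\times\pi_j:E\times(E\times E)\to E\times E$, $\ell=\langle1,0\rangle\times\langle0,1\rangle:E\times E\to(E\times E)\times(E\times E)$ and $c=\langle\langle\pi_0\pi_0,\pi_1\pi_0\rangle,\langle\pi_0\pi_1,\pi_1\pi_1\rangle\rangle$ on $(E\times E)\times(E\times E)$.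
   Context: Composition in diagrammatic order. A Cartesian left additive category: finite products, hom-sets commutative monoids with $f(g+h)=fg+fh$, $f0=0$, projections additive. $\mathsf{P}(A)=A\times A$, $\mathsf{P}(f)=f\times f$. A pre-$\mathsf{D}$-sequence $f_\bullet:A\to B$ is a sequence $(f_0,f_1,\dots)$ with $f_n:\mathsf{P}^n(A)\to B$. For $h:A'\to A$, $h\cdot f_\bullet$ is the pre-$\mathsf{D}$-sequence $(h\cdot f_\bullet)_n=\mathsf{P}^n(h)f_n$; $\mathsf{D}[f_\bullet]:\mathsf{P}(A)\to B$ is $\mathsf{D}[f_\bullet]_n=f_{n+1}$, and $\mathsf{D}^m$ is its iterate; sums and $0_\bullet$ are pointwise. $f_\bullet$ is a $\mathsf{D}$-sequence if for all $n$, with $C=\mathsf{P}^n(A)$ and the maps $\langle1,0\rangle$, $1\times(\pi_0+\pi_1)$, $1\times\pi_j$, $\ell$, $c$ defined as in the claim for the object $C$: [DS.1] $\langle1,0\rangle\cdot\mathsf{D}^{n+1}[f_\bullet]=0_\bullet$; [DS.2] $(1\times(\pi_0+\pi_1))\cdot\mathsf{D}^{n+1}[f_\bullet]=((1\times\pi_0)\cdot\mathsf{D}^{n+1}[f_\bullet])+((1\times\pi_1)\cdot\mathsf{D}^{n+1}[f_\bullet])$; [DS.3] $\ell\cdot\mathsf{D}^{n+2}[f_\bullet]=\mathsf{D}^{n+1}[f_\bullet]$; [DS.4] $c\cdot\mathsf{D}^{n+2}[f_\bullet]=\mathsf{D}^{n+2}[f_\bullet]$. *)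

(* Composition is DIAGRAMMATIC:
   [comp f g] is "f then g", i.e. the paper's  f g. *)
From Stdlib Require Import Arith Lia.

Set Implicit Arguments.
Unset Strict Implicit.

Record CLAC := {
  Ob :> Type;
  Hom : Ob -> Ob -> Type;
  idm : forall A, Hom A A;
  comp : forall A B C, Hom A B -> Hom B C -> Hom A C;
  comp_id_l : forall A B (f : Hom A B), comp (idm A) f = f;
  comp_id_r : forall A B (f : Hom A B), comp f (idm B) = f;
  comp_assoc : forall A B C D (f : Hom A B) (g : Hom B C) (h : Hom C D),
      comp (comp f g) h = comp f (comp g h);
  tobj : Ob;
  bang : forall A, Hom A tobj;
  bang_uniq : forall A (f : Hom A tobj), f = bang A;
  prod : Ob -> Ob -> Ob;
  p0 : forall A B, Hom (prod A B) A;
  p1 : forall A B, Hom (prod A B) B;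
  pair : forall C A B, Hom C A -> Hom C B -> Hom C (prod A B);
  pair_p0 : forall C A B (f : Hom C A) (g : Hom C B), comp (pair f g) (p0 A B) = f;
  pair_p1 : forall C A B (f : Hom C A) (g : Hom C B), comp (pair f g) (p1 A B) = g;
  pair_uniq : forall C A B (h : Hom C (prod A B)),
      h = pair (comp h (p0 A B)) (comp h (p1 A B));
  add : forall A B, Hom A B -> Hom A B -> Hom A B;
  zero : forall A B, Hom A B;
  add_assoc : forall A B (f g h : Hom A B), add (add f g) h = add f (add g h);
  add_comm : forall A B (f g : Hom A B), add f g = add g f;
  add_0l : forall A B (f : Hom A B), add (zero A B) f = f;
  comp_addr : forall A B C (f : Hom A B) (g h : Hom B C),
      comp f (add g h) = add (comp f g) (comp f h);
  comp_0r : forall A B C (f : Hom A B), comp f (zero B C) = zero A C;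
  add_p0 : forall C A B (f g : Hom C (prod A B)),
      comp (add f g) (p0 A B) = add (comp f (p0 A B)) (comp g (p0 A B));
  zero_p0 : forall C A B, comp (zero C (prod A B)) (p0 A B) = zero C A;
  add_p1 : forall C A B (f g : Hom C (prod A B)),
      comp (add f g) (p1 A B) = add (comp f (p1 A B)) (comp g (p1 A B));
  zero_p1 : forall C A B, comp (zero C (prod A B)) (p1 A B) = zero C B
}.

Arguments Hom {X} : rename.
Arguments idm {X} A : rename.
Arguments comp {X A B C} : rename.
Arguments prod {X} : rename.
Arguments p0 {X A B} : rename.
Arguments p1 {X A B} : rename.
Arguments pair {X C A B} : rename.
Arguments add {X A B} : rename.
Arguments zero {X A B} : rename.

Section Defs.
Variable X : CLAC.

Definition prodmap {A A' B B' : X} (f : Hom A A') (g : Hom B B')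
  : Hom (prod A B) (prod A' B') := pair (comp p0 f) (comp p1 g).

Definition P (A : X) : X := prod A A.
Definition Pmor {A B : X} (f : Hom A B) : Hom (P A) (P B) := prodmap f f.

Fixpoint Pn (n : nat) (A : X) : X :=
  match n with 0 => A | S n => P (Pn n A) end.
Fixpoint Pf (n : nat) {A A' : X} (h : Hom A A') : Hom (Pn n A) (Pn n A') :=
  match n with 0 => h | S n => Pmor (Pf n h) end.

Definition castHom {A B : X} (e : A = B) : Hom A B :=
  match e in _ = B return Hom A B with eq_refl => idm A end.

Lemma Pn_Sr (n : nat) (A : X) : Pn n (P A) = P (Pn n A).
Proof. induction n as [|n IH]; simpl; [reflexivity | now rewrite IH]. Qed.

Lemma Pn_add (k m : nat) (A : X) : Pn k (Pn m A) = Pn (k + m) A.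
Proof. induction k as [|k IH]; simpl; [reflexivity | now rewrite IH]. Qed.

Lemma PnE1 (A : X) (n k : nat) (hk : k <= n) :
  Pn k (P (Pn (n - k) A)) = Pn (S n) A.
Proof.
  change (Pn k (Pn (S (n - k)) A) = Pn (S n) A).
  rewrite Pn_add. f_equal. lia.
Qed.

Lemma PnE2 (A : X) (n k : nat) (hk : k <= n) :
  Pn k (P (P (Pn (n - k) A))) = Pn (S (S n)) A.
Proof.
  change (Pn k (Pn (S (S (n - k))) A) = Pn (S (S n)) A).
  rewrite Pn_add. f_equal. lia.
Qed.

Definition preD (A B : X) := forall n : nat, Hom (Pn n A) B.

Definition precomp {A' A B : X} (h : Hom A' A) (f : preD A B) : preD A' B :=
  fun n => comp (Pf n h) (f n).

Definition addD {A B : X} (f g : preD A B) : preD A B := fun n => add (f n) (g n).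
Definition zeroD {A B : X} : preD A B := fun n => zero.

Definition Dd {A B : X} (f : preD A B) : preD (P A) B :=
  fun n => comp (castHom (Pn_Sr n A)) (f (S n)).

Fixpoint Dn (m : nat) {A B : X} (f : preD A B) : preD (Pn m A) B :=
  match m with 0 => f | S m => Dd (Dn m f) end.

Definition unitl (C : X) : Hom C (P C) := pair (idm C) zero.
Definition unitr (C : X) : Hom C (P C) := pair zero (idm C).
Definition sumr (C : X) : Hom (prod C (P C)) (P C) :=
  prodmap (idm C) (add p0 p1).
Definition prj0 (C : X) : Hom (prod C (P C)) (P C) := prodmap (idm C) p0.
Definition prj1 (C : X) : Hom (prod C (P C)) (P C) := prodmap (idm C) p1.
Definition ellm (C : X) : Hom (P C) (P (P C)) := prodmap (unitl C) (unitr C).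
Definition cmap (C : X) : Hom (P (P C)) (P (P C)) :=
  pair (pair (comp p0 p0) (comp p1 p0)) (pair (comp p0 p1) (comp p1 p1)).

Definition isDseq {A B : X} (f : preD A B) : Prop :=
  forall n : nat,
    precomp (unitl (Pn n A)) (Dn (S n) f) = zeroD
 /\ precomp (sumr (Pn n A)) (Dn (S n) f)
      = addD (precomp (prj0 (Pn n A)) (Dn (S n) f))
             (precomp (prj1 (Pn n A)) (Dn (S n) f))
 /\ precomp (ellm (Pn n A)) (Dn (S (S n)) f) = Dn (S n) f
 /\ precomp (cmap (Pn n A)) (Dn (S (S n)) f) = Dn (S (S n)) f.

End Defs.

From Stdlib Require Import Lia ProofIrrelevance FunctionalExtensionality.

(* Each axiom DS.i at level n is an equation between pre-D-sequences, i.e. a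
   family of equations indexed by k, and its k-th component is DS.i' at level
   k + n: the term D^m[f]_k is f_(k+m) transported along the identification
   P^k(P^m A) = P^(k+m) A.  The pairs (n, k) with k <= n are exactly the
   (k + m, k), which gives the equivalence. *)

Lemma forall_le_sub_iff (Q : nat -> nat -> Prop) :
  (forall n k, k <= n -> Q (n - k) k) <-> (forall m k, Q m k).
Proof.
  split.
  - intros H m k. replace m with (k + m - k) by lia. apply H. lia.
  - intros H n k _. apply H.
Qed.

Section DSequences.
Context {X : CLAC} {A B : Ob X}.

Lemma castHom_comp {C D E : Ob X} (e1 : C = D) (e2 : D = E) :
  comp (castHom e1) (castHom e2) = castHom (eq_trans e1 e2).
Proof. destruct e2. apply comp_id_r. Qed.

Lemma comp_castHom_reindex (f : preD A B) {C : Ob X} {i i' : nat}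
  (e : C = Pn i A) (e' : C = Pn i' A) :
  i = i' -> comp (castHom e) (f i) = comp (castHom e') (f i').
Proof. intros ->. now rewrite (proof_irrelevance _ e e'). Qed.

Lemma Dn_castE (f : preD A B) {m j N : nat} (e : Pn j (Pn m A) = Pn N A) :
  N = j + m -> Dn m f j = comp (castHom e) (f N).
Proof.
  revert j e. induction m as [|m IH]; intros j e HN.
  - rewrite (comp_castHom_reindex f e eq_refl) by lia. symmetry. apply comp_id_l.
  - simpl. unfold Dd.
    rewrite (IH (S j) (eq_trans (eq_sym (Pn_Sr j (Pn m A))) e)) by lia.
    rewrite <- comp_assoc, castHom_comp.
    do 2 f_equal. apply proof_irrelevance.
Qed.

Lemma Dn_S_castE (f : preD A B) {n k : nat} (hk : k <= n) :
  Dn (S (n - k)) f k = comp (castHom (PnE1 A hk)) (f (S n)).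
Proof. exact (Dn_castE f (m := S (n - k)) (PnE1 A hk) ltac:(lia)). Qed.

Lemma Dn_SS_castE (f : preD A B) {n k : nat} (hk : k <= n) :
  Dn (S (S (n - k))) f k = comp (castHom (PnE2 A hk)) (f (S (S n))).
Proof. exact (Dn_castE f (m := S (S (n - k))) (PnE2 A hk) ltac:(lia)). Qed.

Definition isDseq_at (f : preD A B) (m k : nat) : Prop :=
     comp (Pf k (unitl (Pn m A))) (Dn (S m) f k) = zero
  /\ comp (Pf k (sumr (Pn m A))) (Dn (S m) f k)
     = add (comp (Pf k (prj0 (Pn m A))) (Dn (S m) f k))
           (comp (Pf k (prj1 (Pn m A))) (Dn (S m) f k))
  /\ comp (Pf k (ellm (Pn m A))) (Dn (S (S m)) f k) = Dn (S m) f k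
  /\ comp (Pf k (cmap (Pn m A))) (Dn (S (S m)) f k) = Dn (S (S m)) f k.

Lemma isDseq_pointwise (f : preD A B) :
  isDseq f <-> forall m k, isDseq_at f m k.
Proof.
  split.
  - intros H m k. destruct (H m) as (H1 & H2 & H3 & H4).
    repeat split;
      [exact (equal_f_dep H1 k) | exact (equal_f_dep H2 k)
      | exact (equal_f_dep H3 k) | exact (equal_f_dep H4 k)].
  - intros H m.
    repeat split; apply functional_extensionality_dep; intro k; apply (H m k).
Qed.

End DSequences.

Theorem proposition4p2 (X : CLAC) (A B : Ob X) (f : preD A B) :
  isDseq f <->
  (forall (n k : nat) (hk : k <= n),
     (* DS.1' *)
     comp (Pf k (unitl (Pn (n - k) A)))
          (comp (castHom (PnE1 A hk)) (f (S n))) = zero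
  /\ (* DS.2' *)
     comp (Pf k (sumr (Pn (n - k) A)))
          (comp (castHom (PnE1 A hk)) (f (S n)))
     = add (comp (Pf k (prj0 (Pn (n - k) A)))
                 (comp (castHom (PnE1 A hk)) (f (S n))))
           (comp (Pf k (prj1 (Pn (n - k) A)))
                 (comp (castHom (PnE1 A hk)) (f (S n))))
  /\ (* DS.3' *)
     comp (Pf k (ellm (Pn (n - k) A)))
          (comp (castHom (PnE2 A hk)) (f (S (S n))))
     = comp (castHom (PnE1 A hk)) (f (S n))
  /\ (* DS.4' *)
     comp (Pf k (cmap (Pn (n - k) A)))
          (comp (castHom (PnE2 A hk)) (f (S (S n))))
     = comp (castHom (PnE2 A hk)) (f (S (S n)))).
Proof.
  rewrite isDseq_pointwise, <- (forall_le_sub_iff (isDseq_at f)).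
  split; intros H n k hk; specialize (H n k hk);
    unfold isDseq_at in *;
    rewrite <- (Dn_S_castE f hk), <- (Dn_SS_castE f hk) in *;
    exact H.
Qed.
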